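(* Let $n\ge4$. The fan $F_{2,n}$ in $\mathbb R^{n-3}$ is equal to the Stanley–Pitman fan $F_{n-3}$ in $\mathbb R^{n-3}$ (they have the same cones).
   Context: $\mathrm{Web}_{k,n}$: grid vertices $v_{a,c}$, $a\in[k]$ (rows top to bottom), $c\in[n-k]$ (columns right to left); sources $s_a$ right of row $a$ labelled $a$; sinks $t_c$ below column $c$ labelled $k+c$; edges $s_a\to v_{a,1}$, $v_{a,c}\to v_{a,c+1}$, $v_{a,c}\to v_{a+1,c}$, $v_{k,c}\to t_c$. Regions $r_{a,c}$ ($a\in[k]$, $c\in[n-k]$): the face just below row $a$ (below row $k$ if $a=k$) and just right of column $c$ (between column 1 and the right boundary if $c=1$); inner regions are those with $a<k$ and $c\ge2$, the others are outer. A path $p$ from $s_i$ moves left along row $i$ to column $c_i$, down, left to $c_{i+1}$, \dots, down from $v_{k,c_k}$ to $t_{c_k}$ ($c_i\le\dots\le c_k$). Given real values $x_r$ on the inner regions (outer regions assigned the value $0$), $\mathrm{Sum}_p(x)=\sum_{a=i}^k\sum_{c=1}^{c_a}x_{r_{a,c}}$. For $K\in\binom{[n]}{k}$, $\mathrm{Path}(K)$ is the set of families of pairwise vertex-disjoint paths from the sources labelled by $[k]\setminus K$ to the sinks labelled by $K\setminus[k]$, and $\operatorname{Trop}P_K(x)=\min_{S\in\mathrm{Path}(K)}\sum_{p\in S}\mathrm{Sum}_p(x)$ (values assigned to outer regions would only add a constant to each $\operatorname{Trop}P_K$). $F_{k,n}$ is the complete fan in $\mathbb R^{(k-1)(n-k-1)}$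 whose maximal cones are the domains of linearity of the piecewise linear map $x\mapsto(\operatorname{Trop}P_K(x))_{K}$, i.e. the common refinement of the fans of domains of linearity of the functions $\operatorname{Trop}P_K$. For $k=2$ the inner regions are $r_{1,c}$, $c=2,\dots,n-2$, and we use coordinates $x_m=x_{r_{1,m+1}}$, $m=1,\dots,n-3$ (inner regions labelled right to left). Stanley–Pitman fan $F_{n-3}$: a plane binary tree is a rooted tree in which every vertex has either no children or exactly two, designated left and right; internal vertices are non-leaves. For a plane binary tree $T$ with $n-1$ leaves, label its $n-2$ internal vertices $1,\dots,n-2$ in in-order (symmetric order: left subtree, then the vertex, then right subtree). For each pair of internal vertices with $i$ the parent of $j$, impose $x_i+\dots+x_{j-1}\ge0$ if $i<j$, and $x_j+\dots+x_{i-1}\le0$ if $i>j$. These $n-3$ inequalities define a cone $C_T\subset\mathbb R^{n-3}$, and $F_{n-3}$ is the fan whose maximal cones are the $C_T$ over all such trees $T$. *)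

From HB Require Import structures.
From mathcomp Require Import all_boot all_order all_algebra.
From mathcomp Require Import classical_sets reals.
Set Implicit Arguments. Unset Strict Implicit. Unset Printing Implicit Defensive.
Import Order.TTheory GRing.Theory Num.Theory.
Local Open Scope ring_scope.
Local Open Scope classical_set_scope.

(* Web_{k,n}.  All row / column / label indices are 1-based naturals, as in   *)
(* the paper.  A path is encoded as (i, [:: c_i; ...; c_k]) : nat * seq nat:  *)
(* it starts at the source s_i, moves left along row i to column c_i, down,   *)
(* left to c_{i+1}, ..., down from v_{k,c_k} to the sink t_{c_k}.             *)

Definition wpath := (nat * seq nat)%type.

Definition pcol (p : wpath) (a : nat) : nat := nth 0%N p.2 (a - p.1).

Definition pend (p : wpath) : nat := last 0%N p.2.

Definition path_ok (k n : nat) (p : wpath) : bool :=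
  [&& (1 <= p.1 <= k)%N, size p.2 == (k - p.1).+1, sorted leq p.2
    & all (fun c => 1 <= c <= n - k)%N p.2].

(* the grid vertex v_{a,c} lies on p (sources and sinks are distinct for
   distinct starting rows / ending columns, which are required separately) *)
Definition on_path (k : nat) (p : wpath) (a c : nat) : bool :=
  [&& (p.1 <= a <= k)%N,
      ((if a == p.1 then 1 else pcol p a.-1) <= c)%N & (c <= pcol p a)%N].

Definition lab_in (n : nat) (K : {set 'I_n}) (l : nat) : bool :=
  [exists i : 'I_n, (i \in K) && (i.+1 == l)].

(* S is an element of Path(K): a family of pairwise vertex-disjoint paths from
   the sources labelled by [k]\K to the sinks labelled by K\[k]
   (sink t_c has label k+c). *)
Definition family_ok (k n : nat) (K : {set 'I_n}) (S : seq wpath) : Prop :=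
  [/\ all (path_ok k n) S,
      uniq (map fst S) /\ uniq (map pend S),
      (forall a, a \in map fst S <-> ((1 <= a <= k)%N /\ ~~ lab_in K a)),
      (forall c, c \in map pend S <-> ((1 <= c <= n - k)%N /\ lab_in K (k + c)))
    & (forall i j, (i < j < size S)%N -> forall a c,
          ~~ (on_path k (nth (0%N, [::]) S i) a c && on_path k (nth (0%N, [::]) S j) a c))].

Arguments family_ok : clear implicits.

(* values on regions: xr a c is the value of r_{a,c}; outer regions get 0 *)
Definition regval (R : realType) (k : nat) (xr : nat -> nat -> R) (a c : nat) : R :=
  if (a < k)%N && (2 <= c)%N then xr a c else 0.

Definition psum (R : realType) (k : nat) (xr : nat -> nat -> R) (p : wpath) : R :=
  \sum_(p.1 <= a < k.+1) \sum_(1 <= c < (pcol p a).+1) regval k xr a c.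

Definition fweight (R : realType) (k : nat) (xr : nat -> nat -> R) (S : seq wpath) : R :=
  \sum_(p <- S) psum k xr p.

Definition full_dim (R : realType) (D : nat) (C : set ('I_D -> R)) : Prop :=
  exists x : 'I_D -> R, exists e : R, 0 < e /\
    forall y : 'I_D -> R, (forall i, `|y i - x i| < e) -> C y.

(* Maximal cones of F_{k,n}, the common refinement of the fans of domains of
   linearity of the Trop P_K.  Points of R^D are mapped to region values by
   [emb]. *)
Definition F_maxcone (R : realType) (k n D : nat)
    (emb : ('I_D -> R) -> nat -> nat -> R) (C : set ('I_D -> R)) : Prop :=
  full_dim C /\
  exists sel : {set 'I_n} -> seq wpath,
    (forall K : {set 'I_n}, #|K| = k -> family_ok k n K (sel K)) /\
    C = [set x | forall K : {set 'I_n}, #|K| = k ->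
                   forall S, family_ok k n K S ->
                     fweight k (emb x) (sel K) <= fweight k (emb x) S].

(* 1-based coordinate x_m of x in R^D (0 outside 1..D) *)
Definition xc (R : realType) (D : nat) (x : 'I_D -> R) (m : nat) : R :=
  if m is m'.+1 then
    (if insub m' is Some i then x (i : 'I_D) else 0) else 0.

(* k = 2: coordinates x_m = x_{r_{1,m+1}}, m = 1..n-3 *)
Definition emb2 (R : realType) (n : nat) (x : 'I_(n - 3) -> R) (a c : nat) : R :=
  if (a == 1%N) && (2 <= c)%N then xc x c.-1 else 0.

Inductive btree : Type := Leaf | Node of btree & btree.

Fixpoint nleaves (t : btree) : nat :=
  match t with Leaf => 1%N | Node l r => (nleaves l + nleaves r)%N end.

Fixpoint nint (t : btree) : nat :=
  match t with Leaf => 0%N | Node l r => (nint l + nint r).+1 end.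

(* in-order label of the root when the labels of t start at o+1 *)
Definition rootlab (t : btree) (o : nat) : option nat :=
  match t with Leaf => None | Node l _ => Some (o + nint l).+1 end.

(* all pairs (i, j) of internal vertices with i the parent of j,
   in-order labels starting at o+1 *)
Fixpoint pc_pairs (t : btree) (o : nat) : seq (nat * nat) :=
  match t with
  | Leaf => [::]
  | Node l r =>
      let i := (o + nint l).+1 in
      (if rootlab l o is Some j then [:: (i, j)] else [::]) ++
      (if rootlab r i is Some j then [:: (i, j)] else [::]) ++
      pc_pairs l o ++ pc_pairs r i
  end.

Definition SPcone (R : realType) (D : nat) (T : btree) : set ('I_D -> R) :=
  [set x | forall e, e \in pc_pairs T 0 ->
     if (e.1 < e.2)%N then 0 <= \sum_(e.1 <= m < e.2) xc x m
     else \sum_(e.2 <= m < e.1) xc x m <= 0].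

From HB Require Import structures.
From mathcomp Require Import all_boot all_order all_algebra.
From mathcomp Require Import classical_sets reals boolp.
From mathcomp Require Import zify ring lra.
Set Implicit Arguments. Unset Strict Implicit. Unset Printing Implicit Defensive.
Import Order.TTheory GRing.Theory Num.Theory.

(* For k = 2 only the path leaving s_1 has a nonzero weight, namely the prefix sum
   P_m(x) = x_1 + ... + x_m where m + 1 is the column at which it turns down.  Hence
   every Trop P_K is the minimum of P_0, ..., P_(n-3) over an interval [s, t], and every
   interval occurs.  A maximal cone of F_{2,n} is therefore the set where, for every
   interval, a chosen index minimises P.  For a plane binary tree on the nodes
   0, ..., n-3 (in in-order), choosing the lowest common ancestor of the interval gives
   exactly the cone C_T, on which P is heap-ordered along the tree; conversely, at an
   interior point of a maximal cone the chosen minimisers are strict, so they are the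
   lowest common ancestors in the Cartesian tree of P at that point. *)

Lemma nleaves_nint (t : btree) : nleaves t = (nint t).+1.
Proof. by elim: t => //= l -> r ->; rewrite addSn addnS. Qed.

(* The internal vertices of [t] are numbered [o], ..., [o + nint t - 1] in in-order,
   one less than their labels in [pc_pairs t o]; [lca t o s u] is the lowest common
   ancestor of the vertices [s], ..., [u]. *)
Fixpoint lca (t : btree) (o s u : nat) : nat :=
  match t with
  | Leaf => 0
  | Node l r =>
      let root := o + nint l in
      if u < root then lca l o s u else if root < s then lca r root.+1 s u else root
  end.

Fixpoint depth (t : btree) (o m : nat) : nat :=
  match t with
  | Leaf => 0
  | Node l r =>
      let root := o + nint l in
      if m < root then (depth l o m).+1
      else if root < m then (depth r root.+1 m).+1 else 0
  end.

Lemma lca_in t o s u : o <= s <= u -> u < o + nint t -> s <= lca t o s u <= u.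
Proof.
elim: t o => [|l IHl r IHr] o /= osu ut; first lia.
by case: ifP => ?; [apply: IHl; lia | case: ifP => ?; [apply: IHr|]; lia].
Qed.

Lemma depth_lca_lt t o s m u : o <= s <= m -> m <= u < o + nint t ->
  m != lca t o s u -> depth t o (lca t o s u) < depth t o m.
Proof.
elim: t o => [|l IHl r IHr] o /andP[os sm] /andP[mu] /= ut; first lia.
case: (ltnP u (o + nint l)) => [ul|lu].
  have /andP[_ lca_u] := lca_in (t := l) (introT andP (conj os (leq_trans sm mu))) ul.
  rewrite (leq_ltn_trans lca_u ul) (leq_ltn_trans mu ul) ltnS.
  by apply: IHl; apply/andP.
case: (ltnP (o + nint l) s) => [ls|sl]; last by rewrite ltnn; case: (ltngtP m (o + nint l)).
have ur : u < (o + nint l).+1 + nint r by rewrite /= addnS addnA in ut.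
have /andP[s_lca _] := lca_in (t := r) (introT andP (conj ls (leq_trans sm mu))) ur.
have lm := leq_trans ls sm.
have l_lca := leq_trans ls s_lca.
rewrite ![lca _ _ _ _ < _]ltnNge ![m < _]ltnNge (ltnW l_lca) (ltnW lm) /= l_lca lm ltnS.
by apply: IHr; apply/andP.
Qed.

Lemma lca_Node_full l r o : lca (Node l r) o o (o + nint (Node l r)).-1 = o + nint l.
Proof. by rewrite /= addnS /= ltn_add2l ltnNge leq_addr /= ltnNge leq_addr. Qed.

Lemma lca_Node_root l r o s u : s <= o + nint l <= u -> lca (Node l r) o s u = o + nint l.
Proof. by move=> /andP[sr ru]; rewrite /= ltnNge ru /= ltnNge sr. Qed.

Lemma lca_Node_l l r o s u : u < o + nint l -> lca (Node l r) o s u = lca l o s u.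
Proof. by move=> ul; rewrite /= ul. Qed.

Lemma lca_Node_r l r o s u : o + nint l < s <= u ->
  lca (Node l r) o s u = lca r (o + nint l).+1 s u.
Proof. by move=> /andP[ls su]; rewrite /= ltnNge (ltnW (leq_trans ls su)) /= ls. Qed.

Section HeapOrder.
Variables (d : Order.disp_t) (X : orderType d).
Implicit Types (f : nat -> X) (t : btree).
Local Open Scope order_scope.

Definition heap_ordered f t o :=
  forall e, e \in pc_pairs t o -> f e.1.-1 <= f e.2.-1.


Lemma heap_ordered_Node f l r o : heap_ordered f (Node l r) o ->
  let root := (o + nint l)%N in
  [/\ heap_ordered f l o, heap_ordered f r root.+1,
      (0 < nint l)%N -> f root <= f (lca l o o root.-1)
    & (0 < nint r)%N -> f root <= f (lca r root.+1 root.+1 (root.+1 + nint r).-1)].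
Proof.
move=> heap root; split.
- by move=> e e_in; apply: heap; rewrite /= !mem_cat e_in !orbT.
- by move=> e e_in; apply: heap; rewrite /= !mem_cat e_in !orbT.
- case: l @root heap => [|ll lr] // root heap _; rewrite lca_Node_full.
  by have := heap (root.+1, (o + nint ll).+1); apply; rewrite /= mem_head.
- case: r heap => [|rl rr] // heap _; rewrite lca_Node_full.
  have := heap (root.+1, (root.+1 + nint rl).+1); apply; rewrite /= !mem_cat.
  by rewrite /root mem_head orbT.
Qed.

Lemma heap_ordered_root_min f t o : heap_ordered f t o ->
  forall m, (o <= m < o + nint t)%N -> f (lca t o o (o + nint t).-1) <= f m.
Proof.
elim: t o => [|l IHl r IHr] o heap m /andP[om mt]; first by rewrite addn0 in mt; lia.
have [heap_l heap_r root_l root_r] := heap_ordered_Node heap.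
rewrite lca_Node_full; case: (ltngtP m (o + nint l)) => [ml|lm|-> //].
- by apply: le_trans (root_l _) (IHl _ heap_l m _); lia.
- by apply: le_trans (root_r _) (IHr _ heap_r m _); rewrite /= in mt; lia.
Qed.

Lemma heap_orderedP f t o : heap_ordered f t o <->
  forall s m u, (o <= s <= m)%N -> (m <= u < o + nint t)%N -> f (lca t o s u) <= f m.
Proof.
split.
  elim: t o => [|l IHl r IHr] o heap s m u /andP[os sm] /andP[mu ut].
    by rewrite addn0 in ut; lia.
  rewrite /= in ut.
  have [heap_l heap_r _ _] := heap_ordered_Node heap.
  have [ul|lu] := ltnP u (o + nint l).
    by rewrite lca_Node_l //; apply: IHl => //; lia.
  have [ls|sl] := ltnP (o + nint l) s.
    by rewrite lca_Node_r ?ls ?(leq_trans sm mu) //; apply: IHr => //; lia.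
  rewrite lca_Node_root ?sl ?lu // -(lca_Node_full l r o).
  by apply: heap_ordered_root_min => //=; lia.
elim: t o => [|l IHl r IHr] o lca_min e //=.
rewrite !mem_cat => /or4P [].
- case: l {IHl} lca_min => [|ll lr] // lca_min; rewrite /= inE => /eqP -> /=.
  have := lca_min (o + nint ll) (o + nint ll) (o + (nint ll + nint lr).+1).
  by rewrite lca_Node_root /=; try apply; lia.
- case: r {IHr} lca_min => [|rl rr] // lca_min; rewrite /= inE => /eqP -> /=.
  have := lca_min (o + nint l) ((o + nint l).+1 + nint rl) ((o + nint l).+1 + nint rl).
  by rewrite lca_Node_root /=; try apply; lia.
- apply: IHl => s m u osm /andP[mu ul].
  by rewrite -(lca_Node_l r) //; apply: lca_min => //=; lia.
- apply: IHr => s m u /andP[ls sm] /andP[mu ur].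
  by rewrite -lca_Node_r ?ls ?(leq_trans sm mu) //; apply: lca_min => /=; lia.
Qed.
End HeapOrder.

Section CartesianTree.
Variables (d : Order.disp_t) (X : orderType d) (f : nat -> X).
Local Open Scope order_scope.

Fixpoint argmin (s u : nat) : nat :=
  if u is u'.+1 then
    if (u <= s)%N then s else let a := argmin s u' in if f u < f a then u else a
  else s.

Lemma argmin_in s u : (s <= u)%N -> (s <= argmin s u <= u)%N.
Proof.
elim: u => [|u IH] /= su; first lia.
case: ifP => us; first lia.
have su' : (s <= u)%N by move/negbT: us; lia.
by have := IH su'; case: ifP => _; lia.
Qed.

Lemma argmin_min s m u : (s <= m <= u)%N -> f (argmin s u) <= f m.
Proof.
elim: u m => [|u IH] m /andP[sm mu] /=; first by have -> : m = s by lia.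
case: ifP => us; first by have -> : m = s by lia.
case: (ltngtP m u.+1) => [mu'||->]; [ | lia | by case: ifP => // /negbT; rewrite -leNgt].
have IHm : f (argmin s u) <= f m by apply: IH; lia.
by case: ifP => // lt; apply: le_trans IHm; apply: ltW.
Qed.

(* The Cartesian tree of [f] on [s], ..., [s + len - 1], provided [len <= fuel]. *)
Fixpoint cartesian (fuel s len : nat) : btree :=
  if fuel is fuel'.+1 then
    if len is 0 then Leaf else
    let a := argmin s (s + len).-1 in
    Node (cartesian fuel' s (a - s)) (cartesian fuel' a.+1 ((s + len).-1 - a))
  else Leaf.

Lemma nint_cartesian fuel s len : (len <= fuel)%N -> nint (cartesian fuel s len) = len.
Proof.
elim: fuel s len => [|fuel IH] s [|len] //= lf.
have a_in : (s <= argmin s (s + len.+1).-1 <= (s + len.+1).-1)%N.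
  by apply: argmin_in; lia.
by rewrite !IH; lia.
Qed.

Lemma cartesian_lca_min fuel s len s' m u : (len <= fuel)%N ->
  (s <= s' <= m)%N -> (m <= u < s + len)%N -> f (lca (cartesian fuel s len) s s' u) <= f m.
Proof.
elim: fuel s len s' u => [|fuel IH] s [|len] s' u lf /andP[ss' s'm] /andP[mu us]; try lia.
set a := argmin s (s + len.+1).-1.
have a_in : (s <= a <= (s + len.+1).-1)%N by apply: argmin_in; lia.
have -> : cartesian fuel.+1 s len.+1 =
  Node (cartesian fuel s (a - s)) (cartesian fuel a.+1 ((s + len.+1).-1 - a)) by [].
have root_a : (s + nint (cartesian fuel s (a - s)))%N = a by rewrite nint_cartesian; lia.
have [ua|au] := ltnP u a.
  by rewrite lca_Node_l ?root_a //; apply: IH; lia.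
have [as'|s'a] := ltnP a s'.
  rewrite lca_Node_r ?root_a ?as' ?(leq_trans s'm mu) //.
  by apply: IH; lia.
rewrite lca_Node_root ?root_a ?s'a ?au //.
by apply: argmin_min; lia.
Qed.

Definition cartesian_tree len := cartesian len 0 len.

Lemma nint_cartesian_tree len : nint (cartesian_tree len) = len.
Proof. exact: nint_cartesian. Qed.

Lemma cartesian_tree_lca_min len s m u : (s <= m)%N -> (m <= u < len)%N ->
  f (lca (cartesian_tree len) 0 s u) <= f m.
Proof. by move=> sm mul; apply: cartesian_lca_min; rewrite ?add0n. Qed.
End CartesianTree.

Local Open Scope ring_scope.

Section PrefixSums.
Variables (R : realType) (D : nat).
Implicit Types (x y : 'I_D -> R) (f : nat -> R).

(* [psums x m] is x_1 + ... + x_m, since [xc x 0 = 0]. *)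
Definition psums x (m : nat) : R := \sum_(i < m.+1) xc x i.

Definition diffs f : 'I_D -> R := fun j => f j.+1 - f j.

Lemma psums0 x : psums x 0 = 0.
Proof. by rewrite /psums big_ord1. Qed.

Lemma psumsS x m : psums x m.+1 = psums x m + xc x m.+1.
Proof. by rewrite /psums big_ord_recr. Qed.

Lemma xc_ord x (j : 'I_D) : xc x j.+1 = x j.
Proof. by rewrite /= valK. Qed.

Lemma xc_out x j : (D <= j)%N -> xc x j.+1 = 0.
Proof. by move=> Dj; rewrite /= insubF // ltnNge Dj. Qed.

Lemma psums_diffs f m : (m <= D)%N -> psums (diffs f) m = f m - f 0.
Proof.
elim: m => [|m IH] mD; first by rewrite psums0 subrr.
by rewrite psumsS IH 1?ltnW // (xc_ord _ (Ordinal mD)) /diffs /= addrC addrA subrK.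
Qed.

Lemma diffs_psums x : diffs (psums x) = x.
Proof. by apply: funext => j; rewrite /diffs psumsS xc_ord addrC addKr. Qed.

Lemma sum_xc x a b : (0 < a <= b)%N ->
  \sum_(a <= m < b) xc x m = psums x b.-1 - psums x a.-1.
Proof.
move=> /andP[a_gt0 ab].
have psumsE k : psums x k = \sum_(0 <= m < k.+1) xc x m by rewrite big_mkord.
rewrite !psumsE !prednK ?(leq_trans a_gt0 ab) //.
by rewrite (big_cat_nat (leq0n a) ab) /= addrC addrK.
Qed.

Lemma psums_lipschitz x y e m : 0 <= e -> (forall j, `|y j - x j| <= e) ->
  `|psums y m - psums x m| <= m%:R * e.
Proof.
move=> e_ge0 yx; elim: m => [|m IH]; first by rewrite !psums0 subrr normr0 mul0r.
have xc_yx : `|xc y m.+1 - xc x m.+1| <= e.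
  by case: (ltnP m D) => mD; rewrite ?(xc_ord _ (Ordinal mD)) ?xc_out ?subrr ?normr0.
rewrite !psumsS opprD addrACA -natr1 mulrDl mul1r.
by apply: le_trans (ler_normD _ _) (lerD IH xc_yx).
Qed.

End PrefixSums.

Lemma pc_pairs_gt t o e : e \in pc_pairs t o -> (o < e.1)%N && (o < e.2)%N.
Proof.
elim: t o => [|l IHl r IHr] o //; rewrite [pc_pairs _ _]/= !mem_cat => /or4P[].
- by case: l {IHl} => // ll lr; rewrite /= inE => /eqP -> /=; lia.
- by case: r {IHr} => // rl rr; rewrite /= inE => /eqP -> /=; lia.
- by move/IHl; lia.
- by move/IHr; lia.
Qed.

Lemma SPconeE (R : realType) D T (x : 'I_D -> R) :
  SPcone T x <-> heap_ordered (psums x) T 0.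
Proof.
rewrite /SPcone /heap_ordered /=.
by split=> cone e e_in; have /andP[e1 e2] := pc_pairs_gt e_in; move: (cone e e_in);
  case: ltnP => e12; rewrite sum_xc ?e1 ?e2 ?(ltnW e12) //= ?subr_ge0 ?subr_le0.
Qed.

Section ArgminCones.
Variables (R : realType) (N : nat).
Implicit Types (x y : 'I_N -> R).

Lemma psums_lt_of_nbhd x0 e a b : 0 < e -> (a <= N)%N -> (b <= N)%N -> a != b ->
  (forall y, (forall j, `|y j - x0 j| < e) -> psums y a <= psums y b) ->
  psums x0 a < psums x0 b.
Proof.
move=> e_gt0 aN bN ab near; rewrite ltNge; apply/negP => ba.
have bool_diff (b1 b2 : bool) : `|b1%:R - b2%:R : R| <= 1.
  by case: b1; case: b2; rewrite ?subrr ?subr0 ?sub0r ?normrN ?normr0 ?normr1.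
pose c := e / 2; have c_gt0 : 0 < c by rewrite divr_gt0.
(* at [y], P_a - P_b exceeds its value at [x0] by [c] *)
pose y := diffs (D := N) (fun k => psums x0 k + c * (k == a)%:R).
have y_near (j : 'I_N) : `|y j - x0 j| < e.
  have -> : y j - x0 j = c * ((j.+1 == a)%:R - (j == a :> nat)%:R).
    by rewrite -[x0 j](congr1 (fun x => x j) (diffs_psums x0)) /y /diffs; ring.
  rewrite normrM gtr0_norm //; apply: le_lt_trans (ler_wpM2l (ltW c_gt0) (bool_diff _ _)) _.
  by rewrite mulr1 /c; lra.
have := near y y_near; rewrite !psums_diffs // eqxx [b == a]eq_sym (negbTE ab) /=.
by rewrite mulr1 mulr0 addr0 lerD2r /c; lra.
Qed.

Lemma full_dim_SPcone T : nint T = N.+1 -> full_dim (@SPcone R N T).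
Proof.
(* at [x0], P_m is the depth of [m] minus that of [0] *)
move=> TN; pose x0 := diffs (R := R) (D := N) (fun m => (depth T 0 m)%:R).
pose e : R := (N.+1%:R * 2)^-1.
have e_gt0 : 0 < e by rewrite invr_gt0 mulr_gt0 ?ltr0n.
have Ne_small : N%:R * e * 2 <= 1.
  by rewrite /e mulrAC ler_pdivrMr ?mulr_gt0 ?ltr0n // mul1r -natr1; lra.
exists x0, e; split=> // y y_near.
have y_close k : (k <= N)%N ->
    `|psums y k - ((depth T 0 k)%:R - (depth T 0 0)%:R)| <= N%:R * e.
  move=> kN; rewrite -(psums_diffs (fun m => (depth T 0 m)%:R) kN).
  apply: le_trans (psums_lipschitz k (ltW e_gt0) (fun j => ltW (y_near j))) _.
  by rewrite ler_wpM2r ?ler_nat // ltW.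
apply/SPconeE/heap_orderedP => s m u /andP[_ sm] /andP[mu]; rewrite TN add0n ltnS => uN.
have u_lt : (u < 0 + nint T)%N by rewrite TN add0n ltnS.
case: (eqVneq m (lca T 0 s u)) => [-> // | m_lca].
have /andP[s_lca lca_u] := lca_in (leq_trans sm mu : (0 <= s <= u)%N) u_lt.
have := depth_lca_lt (sm : (0 <= s <= m)%N) (introT andP (conj mu u_lt)) m_lca.
rewrite -(ler_nat R) -natr1 => depth_lt.
have := y_close _ (leq_trans lca_u uN); have := y_close _ (leq_trans mu uN).
rewrite !ler_norml => /andP[? ?] /andP[? ?]; lra.
Qed.

Section IntervalFamily.
Variables (J : Type) (dom : J -> Prop) (itv : J -> nat * nat).

Definition argmin_cone (mu : J -> nat) : set ('I_N -> R) :=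
  [set x | forall j, dom j -> forall m, ((itv j).1 <= m <= (itv j).2)%N ->
     psums x (mu j) <= psums x m].

Hypothesis itv_sub : forall j, dom j -> ((itv j).1 <= (itv j).2 <= N)%N.
Hypothesis itv_onto : forall s t, (s <= t <= N)%N -> exists2 j, dom j & itv j = (s, t).

Lemma argmin_cone_lca T : nint T = N.+1 ->
  argmin_cone (fun j => lca T 0 (itv j).1 (itv j).2) = SPcone T.
Proof.
move=> TN; apply/seteqP; split=> x x_in.
  apply/SPconeE/heap_orderedP => s m u /andP[_ sm] /andP[mu]; rewrite TN add0n ltnS => uN.
  have [j dj itv_j] := itv_onto (introT andP (conj (leq_trans sm mu) uN)).
  by have := x_in j dj m; rewrite itv_j; apply; apply/andP.
move=> j dj m /andP[sm mt]; have /andP[_ tN] := itv_sub dj.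
by move/SPconeE/heap_orderedP: x_in; apply; rewrite ?sm ?mt ?TN ?add0n ?ltnS.
Qed.

Theorem argmin_cone_SPcone C :
  (full_dim C /\ exists2 mu, (forall j, dom j -> ((itv j).1 <= mu j <= (itv j).2)%N) &
     C = argmin_cone mu) <->
  exists T, nint T = N.+1 /\ C = SPcone T.
Proof.
have lca_itv T j : nint T = N.+1 -> dom j ->
    ((itv j).1 <= lca T 0 (itv j).1 (itv j).2 <= (itv j).2)%N.
  by move=> TN /itv_sub /andP[st tN]; apply: lca_in; rewrite ?st ?TN ?add0n ?ltnS.
split=> [[[x0 [e [e_gt0 near]]] [mu mu_itv C_mu]] | [T [TN ->]]]; last first.
  split; first exact: full_dim_SPcone.
  exists (fun j => lca T 0 (itv j).1 (itv j).2); last by rewrite argmin_cone_lca.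
  by move=> j; exact: lca_itv.
subst C; pose T := cartesian_tree (psums x0) N.+1.
have TN : nint T = N.+1 := nint_cartesian_tree _ _.
exists T; split=> //; rewrite -argmin_cone_lca //.
suff mu_lca j : dom j -> mu j = lca T 0 (itv j).1 (itv j).2.
  by apply/seteqP; split=> x x_in j dj; have := x_in j dj; rewrite mu_lca.
move=> dj; have /andP[_ tN] := itv_sub dj.
have /andP[s_mu mu_t] := mu_itv j dj; have /andP[s_lca lca_t] := lca_itv T j TN dj.
apply/eqP; apply: contraT => mu_ne_lca.
have := psums_lt_of_nbhd e_gt0 (leq_trans mu_t tN) (leq_trans lca_t tN) mu_ne_lca
  (fun y y_near => near y y_near j dj _ (introT andP (conj s_lca lca_t))).
rewrite ltNge (cartesian_tree_lca_min (psums x0) s_mu) //.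
by rewrite mu_t ltnS.
Qed.
End IntervalFamily.

End ArgminCones.

Lemma eq_of_uniq_map (T1 T2 : eqType) (f : T1 -> T2) s a b :
  uniq (map f s) -> a \in s -> b \in s -> f a = f b -> a = b.
Proof.
elim: s => //= c s IH /andP[c_s s_uniq]; rewrite !inE.
case/predU1P => [->|a_s] /predU1P [->|b_s] // fab.
- by move: c_s; rewrite fab map_f.
- by move: c_s; rewrite -fab map_f.
- exact: IH.
Qed.

Lemma family_disjoint k n K S p q a c : family_ok k n K S ->
  p \in S -> q \in S -> p != q -> ~~ (on_path k p a c && on_path k q a c).
Proof.
case=> _ _ _ _ disj pS qS pq.
have ip := index_mem p S; have iq := index_mem q S; rewrite pS in ip; rewrite qS in iq.
have /negPf ipq : index p S != index q S.
  by apply: contra pq => /eqP e; rewrite -(nth_index (0%N, [::]) pS) e nth_index.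
case: (ltngtP (index p S) (index q S)) ipq => // lt _.
- by have := disj _ _ (introT andP (conj lt iq)) a c; rewrite !nth_index.
- by have := disj _ _ (introT andP (conj lt ip)) a c; rewrite !nth_index // andbC.
Qed.

Section Web2.
Variables (R : realType) (n : nat).
Implicit Types (x : 'I_(n - 3) -> R) (K : {set 'I_n}) (S : seq wpath).

Lemma regval_emb2 x a c :
  regval 2 (emb2 x) a c = if (a == 1%N) && (2 <= c)%N then xc x c.-1 else 0.
Proof. by rewrite /regval /emb2; case: a => [|[|a]] /=; case: (1 < c)%N. Qed.

Lemma sum_regval_emb2 x k : \sum_(1 <= c < k.+1) regval 2 (emb2 x) 1 c = psums x k.-1.
Proof.
elim: k => [|k IH]; first by rewrite big_geq // psums0.
rewrite big_nat_recr //= IH regval_emb2 /=.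
by case: k {IH} => [|k]; rewrite /= ?addr0 ?psumsS.
Qed.

Lemma psum_emb2 x p :
  psum 2 (emb2 x) p = if (p.1 <= 1)%N then psums x (pcol p 1).-1 else 0.
Proof.
rewrite /psum (eq_bigr (fun a => if a == 1%N then psums x (pcol p a).-1 else 0)).
  by rewrite -big_mkcond big_nat1_eq andbT.
move=> a _; case: eqP => [->|a1]; first exact: sum_regval_emb2.
by apply: big1 => c _; rewrite regval_emb2; case: eqP.
Qed.

Lemma fweight_family x K S : family_ok 2 n K S -> fweight 2 (emb2 x) S =
  \sum_(p <- S) (if p.1 == 1%N then psums x (pcol p 1).-1 else 0).
Proof.
case=> /allP S_ok _ _ _ _; apply: eq_big_seq => p /S_ok.
by rewrite psum_emb2 => /and4P[/andP[p1 _] _ _ _]; rewrite eqn_leq p1 andbT.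
Qed.

Lemma fweight_source1 x K S p : family_ok 2 n K S -> p \in S -> p.1 = 1%N ->
  fweight 2 (emb2 x) S = psums x (pcol p 1).-1.
Proof.
move=> S_fam pS p1; have [_ [fst_uniq _] _ _ _] := S_fam.
rewrite (fweight_family _ S_fam) (bigD1_seq p) ?(map_uniq fst_uniq) //= p1 eqxx.
rewrite big1_seq ?addr0 // => q /andP[qp qS]; case: eqP => // q1.
by move: qp; rewrite (eq_of_uniq_map fst_uniq qS pS) ?eqxx // q1 p1.
Qed.

Lemma fweight_no_source1 x K S : family_ok 2 n K S -> 1%N \notin map fst S ->
  fweight 2 (emb2 x) S = psums x 0.
Proof.
move=> S_fam no1; rewrite (fweight_family _ S_fam) psums0 big1_seq // => q /andP[_ qS].
by case: eqP => // q1; case/mapP: no1; exists q.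
Qed.

Definition labels2 K (uv : nat * nat) :=
  (uv.1 < uv.2)%N /\ forall l, lab_in K l = (l == uv.1) || (l == uv.2).

Lemma lab_in_ord K (i : 'I_n) : lab_in K i.+1 = (i \in K).
Proof.
apply/existsP/idP => [[j /andP[jK /eqP/succn_inj ji]]|iK]; last by exists i; rewrite iK eqxx.
by rewrite (_ : i = j) //; apply: val_inj.
Qed.

Lemma lab_in_range K l : lab_in K l -> (0 < l <= n)%N.
Proof. by case/existsP => i /andP[_ /eqP <-]; rewrite ltn_ord. Qed.

Lemma labels2_set2 (a b : 'I_n) : (a < b)%N -> labels2 [set a; b] (a.+1, b.+1).
Proof.
split=> // l; apply/existsP/orP => [[i /andP[]]|].
  by rewrite in_set2 => /orP[] /eqP -> /eqP <-; [left | right].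
by case=> /eqP ->; [exists a; rewrite set21 eqxx | exists b; rewrite set22 eqxx].
Qed.

Lemma labels2_range K uv : labels2 K uv -> (0 < uv.1)%N /\ (uv.2 <= n)%N.
Proof.
case=> _ lab; have /lab_in_range/andP[-> _] : lab_in K uv.1 by rewrite lab eqxx.
by have /lab_in_range/andP[_ ->] : lab_in K uv.2 by rewrite lab eqxx orbT.
Qed.

Lemma labels2_inj K K' uv : labels2 K uv -> labels2 K' uv -> K = K'.
Proof. by move=> [_ lab] [_ lab']; apply/setP => i; rewrite -!lab_in_ord lab lab'. Qed.

Lemma labels2_uniq K uv uv' : labels2 K uv -> labels2 K uv' -> uv = uv'.
Proof.
case: uv uv' => [u v] [u' v'] [/= uv lab] [/= uv' lab'].
have e l : (l == u) || (l == v) = (l == u') || (l == v') by rewrite -lab -lab'.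
by move: (e u) (e v) (e u') (e v'); rewrite !eqxx ?orbT /= => ? ? ? ?; congr pair; lia.
Qed.

Lemma card_labels2 K : #|K| = 2%N <-> exists uv, labels2 K uv.
Proof.
split=> [/eqP/cards2P [a [b [ab ->]]] | [[u v] Kuv]].
  case: (ltngtP a b) => [lt|gt|eq]; last by move: ab; rewrite (val_inj eq) eqxx.
    by exists (a.+1, b.+1); apply: labels2_set2.
  by exists (b.+1, a.+1); rewrite finset.setUC; apply: labels2_set2.
have [/= u_gt0 vn] := labels2_range Kuv; have /= uv := Kuv.1.
have [u' u'_lt u'E] : exists2 u', (u' < n)%N & u = u'.+1 by exists u.-1; lia.
have [v' v'_lt v'E] : exists2 v', (v' < n)%N & v = v'.+1 by exists v.-1; lia.
have K_set2 : K = [set Ordinal u'_lt; Ordinal v'_lt].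
  by apply: (labels2_inj Kuv); rewrite u'E v'E; apply: labels2_set2; rewrite /=; lia.
by rewrite K_set2 cards2 -(inj_eq val_inj) /=; case: eqP => //; lia.
Qed.

(* For K = {u < v}, the path from s_1 (present iff u <> 1) turns down at a column c with
   c - 1 in [label_itv (u, v)]; when u >= 3 it must turn down left of the path from s_2
   to t_(u-2), whence the lower bound. *)
Definition label_itv (uv : nat * nat) : nat * nat :=
  ((uv.1 - 2)%N, if uv.1 == 1%N then 0%N else (uv.2 - 3)%N).

Lemma path_ok_row1 c : path_ok 2 n (1%N, c) ->
  exists c1 c2, c = [:: c1; c2] /\ (0 < c1 <= c2)%N /\ (c2 <= n - 2)%N.
Proof.
case/and4P=> _; case: c => [|c1 [|c2 []]] //= _.
rewrite andbT => c12 /and3P[/andP[c1_gt0 _] /andP[_ c2n] _].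
by exists c1, c2; rewrite c1_gt0 c12 c2n.
Qed.

Lemma path_ok_row2 c : path_ok 2 n (2%N, c) -> exists d, c = [:: d] /\ (0 < d <= n - 2)%N.
Proof. by case/and4P=> _; case: c => [|d []] //= _ _; rewrite andbT; exists d. Qed.

Lemma family_ok2_sound K uv S : labels2 K uv -> family_ok 2 n K S ->
  exists m, ((label_itv uv).1 <= m <= (label_itv uv).2)%N /\
            forall x, fweight 2 (emb2 x) S = psums x m.
Proof.
case: uv => u v Kuv S_fam; have [/= uv lab] := Kuv; have [/= u_gt0 _] := labels2_range Kuv.
have [/allP S_ok _ sources sinks _] := S_fam.
have [u1|u_ne1] := eqVneq u 1%N.
  exists 0%N; split; first by rewrite /label_itv u1.
  by move=> x; apply: fweight_no_source1 S_fam _; apply/negP => /sources[_]; rewrite lab u1 eqxx.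
have [[a c] pS /= a1] : exists2 p, p \in S & p.1 = 1%N.
  have /sources : (1 <= 1 <= 2)%N /\ ~~ lab_in K 1 by rewrite lab; split=> //; apply/norP; lia.
  by case/mapP=> p pS ->; exists p.
subst a; have [c1 [c2 [cE [c12 c2n]]]] := path_ok_row1 (S_ok _ pS); subst c.
exists c1.-1; split; last by move=> x; rewrite (fweight_source1 _ S_fam pS).
have /sinks[_] : c2 \in map pend S by apply/mapP; exists (1%N, [:: c1; c2]).
rewrite lab => /orP sink_c2.
have [u2|u_ne2] := eqVneq u 2%N.
  by rewrite /label_itv u2 /=; case: sink_c2 => /eqP; lia.
have [[a d] qS /= a2] : exists2 q, q \in S & q.1 = 2%N.
  have /sources : (1 <= 2 <= 2)%N /\ ~~ lab_in K 2 by rewrite lab; split=> //; apply/norP; lia.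
  by case/mapP=> q qS ->; exists q.
subst a; have [d' [dE d_n]] := path_ok_row2 (S_ok _ qS); subst d.
have /sinks[_] : d' \in map pend S by apply/mapP; exists (2%N, [:: d']).
rewrite lab => /orP sink_d.
have d_c1 : (d' < c1)%N.
  rewrite ltnNge; apply/negP => c1_d.
  have pq : (1%N, [:: c1; c2]) != (2%N, [:: d']) by [].
  move/negP: (family_disjoint 2 c1 S_fam pS qS pq); apply.
  by case/andP: c12 => c1_gt0 c1c2; rewrite /on_path /pcol /= leqnn c1c2 c1_gt0 c1_d.
by case: sink_c2 => /eqP; case: sink_d => /eqP; lia.
Qed.

Lemma family_ok2_complete K uv m : labels2 K uv ->
  ((label_itv uv).1 <= m <= (label_itv uv).2)%N ->
  exists S, family_ok 2 n K S /\ forall x, fweight 2 (emb2 x) S = psums x m.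
Proof.
case: uv => u v Kuv; have [/= uv lab] := Kuv; have [/= u_gt0 vn] := labels2_range Kuv.
rewrite /label_itv /=; have [u1|u_ne1] := eqVneq u 1%N.
  rewrite u1 => /andP[_ m0]; have {m0}-> : m = 0%N by lia.
  have [v2|v_ne2] := eqVneq v 2%N.
    exists [::]; split; last by move=> x; rewrite /fweight big_nil psums0.
    split=> //; [move=> a | move=> c | move=> i j /=]; rewrite ?lab ?in_nil /=; lia.
  pose S := [:: (2%N, [:: (v - 2)%N])].
  have S_fam : family_ok 2 n K S.
    split=> //; [rewrite /= /path_ok /= | move=> a | move=> c | move=> i j /=];
      rewrite ?lab ?inE /pend /=; lia.
  by exists S; split=> // x; apply: (fweight_no_source1 _ S_fam).
move=> m_itv.
pose S := (1%N, [:: m.+1; (v - 2)%N]) :: (if u == 2%N then [::] else [:: (2%N, [:: (u - 2)%N])]).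
have S_fam : family_ok 2 n K S.
  rewrite /S; case: eqP => [u2|u_ne2].
    split=> //; [rewrite /= /path_ok /= | move=> a | move=> c | move=> i j /=];
      rewrite ?lab ?inE /pend /=; lia.
  split=> //; [rewrite /= /path_ok /= | rewrite /= inE /pend /= | move=> a | move=> c |
    move=> i j /= ij a c; have [-> ->] : i = 0%N /\ j = 1%N by lia];
    rewrite ?lab ?inE /pend /on_path /pcol /=; try lia.
  by case: a => [|[|[|a]]] /=; lia.
by exists S; split=> // x; rewrite (fweight_source1 _ S_fam (mem_head _ _)).
Qed.

Definition is_label_pair (uv : nat * nat) := exists K, labels2 K uv.

Lemma label_itv_sub uv : is_label_pair uv ->
  ((label_itv uv).1 <= (label_itv uv).2 <= n - 3)%N.
Proof.
case: uv => u v [K Kuv]; have [/= uv _] := Kuv; have [/= u_gt0 vn] := labels2_range Kuv.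
by rewrite /label_itv /=; case: eqP; lia.
Qed.

Lemma label_itv_onto s t : (3 <= n)%N -> (s <= t <= n - 3)%N ->
  exists2 uv, is_label_pair uv & label_itv uv = (s, t).
Proof.
move=> n3 /andP[st tn]; have s_lt : (s.+1 < n)%N by lia.
have t_lt : (t.+2 < n)%N by lia.
exists (s.+2, t.+3); last by rewrite /label_itv /= subn2 /=; congr pair; lia.
by exists [set Ordinal s_lt; Ordinal t_lt]; apply: labels2_set2; rewrite /=; lia.
Qed.

Lemma trop_attained_argmin_cone (sel : {set 'I_n} -> seq wpath) (mu : nat * nat -> nat) :
  (forall K uv, labels2 K uv -> family_ok 2 n K (sel K) /\
     forall x, fweight 2 (emb2 x) (sel K) = psums x (mu uv)) ->
  [set x : 'I_(n - 3) -> R | forall K : {set 'I_n}, #|K| = 2%N -> forall S, family_ok 2 n K S ->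
     fweight 2 (emb2 x) (sel K) <= fweight 2 (emb2 x) S]%classic =
  argmin_cone is_label_pair label_itv mu.
Proof.
move=> sel_spec; apply/seteqP; split=> x x_in.
  move=> uv [K Kuv] m m_itv; have [S [S_fam S_w]] := family_ok2_complete Kuv m_itv.
  have K2 : #|K| = 2%N by apply/card_labels2; exists uv.
  by have := x_in K K2 S S_fam; rewrite (sel_spec K uv Kuv).2 S_w.
move=> K /card_labels2[uv Kuv] S S_fam; have [m [m_itv ->]] := family_ok2_sound Kuv S_fam.
by rewrite (sel_spec K uv Kuv).2; apply: x_in m_itv; exists K.
Qed.

Lemma F_maxcone2E C : F_maxcone 2 n (@emb2 R n) C <->
  full_dim C /\ exists2 mu, (forall uv, is_label_pair uv ->
    ((label_itv uv).1 <= mu uv <= (label_itv uv).2)%N) &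
    C = argmin_cone is_label_pair label_itv mu.
Proof.
split=> [[C_full [sel [sel_fam C_sel]]] | [C_full [mu mu_itv C_mu]]]; split=> //.
  have /choice[mu mu_spec] : forall uv, exists m, forall K, labels2 K uv ->
      ((label_itv uv).1 <= m <= (label_itv uv).2)%N /\
      forall x, fweight 2 (emb2 x) (sel K) = psums x m.
    move=> uv; have [[K0 K0uv]|no_K] := pselect (is_label_pair uv); last first.
      by exists 0%N => K Kuv; case: no_K; exists K.
    have K0_2 : #|K0| = 2%N by apply/card_labels2; exists uv.
    have [m [m_itv m_w]] := family_ok2_sound K0uv (sel_fam K0 K0_2).
    by exists m => K Kuv; rewrite (labels2_inj Kuv K0uv).
  exists mu; first by move=> uv [K Kuv]; case: (mu_spec uv K Kuv).
  rewrite C_sel; apply: trop_attained_argmin_cone => K uv Kuv.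
  split; last exact: (mu_spec uv K Kuv).2.
  by apply: sel_fam; apply/card_labels2; exists uv.
have /choice[sel sel_spec] : forall K, exists S, forall uv, labels2 K uv ->
    family_ok 2 n K S /\ forall x, fweight 2 (emb2 x) S = psums x (mu uv).
  move=> K; have [[uv Kuv]|no_uv] := pselect (exists uv, labels2 K uv); last first.
    by exists [::] => uv Kuv; case: no_uv; exists uv.
  have [S S_spec] := family_ok2_complete Kuv (mu_itv uv (ex_intro _ K Kuv)).
  by exists S => uv' Kuv'; rewrite -(labels2_uniq Kuv Kuv').
exists sel; split; first by move=> K /card_labels2[uv /sel_spec[]].
by rewrite C_mu (trop_attained_argmin_cone sel_spec).
Qed.

End Web2.

Theorem mainTheorem8 (R : realType) (n : nat) (hn : (4 <= n)%N)
    (C : set ('I_(n - 3) -> R)) :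
  F_maxcone 2 n (@emb2 R n) C <->
  exists T : btree, nleaves T = n.-1 /\ C = @SPcone R (n - 3) T.
Proof.
have n3 : (3 <= n)%N by apply: ltnW.
rewrite F_maxcone2E (argmin_cone_SPcone (@label_itv_sub n) (fun _ _ => label_itv_onto n3)).
by split=> -[T [T_nint ->]]; exists T; split=> //; move: T_nint; rewrite nleaves_nint; lia.
Qed.
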